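(* Let $\mathbb F=\mathbb R$ or $\mathbb C$, $G$ an algebraic group over $\mathbb F$, $\rho:G\to\mathrm{GL}(V)$ a rational representation on an $n$-dimensional space with $\rho(G)\subseteq\mathrm{SL}(V)$, and $0<k<n$. Let $P=\{T\in V\otimes\mathbb F^k:\mathrm{Stab}_{G\times\mathrm{SL}_k}(T)\text{ is not compact}\}$ and $P'=\{S\in V^*\otimes\mathbb F^{n-k}:\mathrm{Stab}_{G\times\mathrm{SL}_{n-k}}(S)\text{ is not compact}\}$. Then $P$ contains a non-empty Euclidean (resp. Zariski) open subset of $V\otimes\mathbb F^k$ if and only if $P'$ contains a non-empty Euclidean (resp. Zariski) open subset of $V^*\otimes\mathbb F^{n-k}$.
   Context: $G\times\mathrm{SL}_k$ acts on $V\otimes\mathbb F^k$ by $(g,A)(v\otimes w)=\rho(g)v\otimes Aw$; $G\times\mathrm{SL}_{n-k}$ acts on $V^*\otimes\mathbb F^{n-k}$ analogously via the dual representation. Stabilizers are closed subgroups and carry their Lie group topology. *)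

From HB Require Import structures.
From mathcomp Require Import all_boot all_order all_algebra.
From mathcomp Require Import all_classical all_reals all_analysis.
From mathcomp Require Import complex.
From mathcomp Require mpoly.
Import Order.TTheory GRing.Theory Num.Theory.
Import numFieldNormedType.Exports.

Set Implicit Arguments.
Unset Strict Implicit.
Unset Printing Implicit Defensive.

Local Open Scope ring_scope.
Local Open Scope classical_set_scope.

(* The ground field F is either R or C = R[i] (R : realType); it is kept
   generic as a numFieldType and carries its Euclidean (norm) topology;
   matrix spaces 'M[F]_(m,n) carry the product (Euclidean) topology. *)

Definition mxcoords (F : numFieldType) m n (A : 'M[F]_(m, n)) : 'I_(m * n) -> F :=
  fun i => mxvec A 0 i.

Definition mxeval (F : numFieldType) m n (p : mpoly.mpoly (m * n) F)
    (A : 'M[F]_(m, n)) : F :=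
  mpoly.meval (mxcoords A) p.

Definition zariski_open (F : numFieldType) m n (U : set 'M[F]_(m, n)) : Prop :=
  exists S : set (mpoly.mpoly (m * n) F),
    U = ~` [set A | forall p, S p -> mxeval p A = 0].

Definition euclid_open (F : numFieldType) m n (U : set 'M[F]_(m, n)) : Prop :=
  open U.

(* (The F-points of) a linear algebraic group: a subgroup of GL_N(F) which is
   Zariski closed in GL_N(F), i.e. cut out in GL_N(F) by polynomial
   equations in the matrix entries. *)
Definition linear_algebraic_group (F : numFieldType) N (G : set 'M[F]_N) : Prop :=
  [/\ exists S : set (mpoly.mpoly (N * N) F),
        G = [set g | g \in unitmx /\ forall p, S p -> mxeval p g = 0],
      G 1%:M,
      (forall g h, G g -> G h -> G (g *m h)) &
      (forall g, G g -> G (invmx g))].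

(* A rational representation rho : G -> GL_n(F): a group homomorphism whose
   matrix coefficients are regular functions on G, i.e. of the form
   p_ij(g) / det(g)^e with polynomials p_ij in the entries of g. *)
Definition rational_rep (F : numFieldType) N n (G : set 'M[F]_N)
    (rho : 'M[F]_N -> 'M[F]_n) : Prop :=
  [/\ exists (P : 'I_n -> 'I_n -> mpoly.mpoly (N * N) F) (e : nat),
        forall g, G g -> rho g = \matrix_(i, j) (mxeval (P i j) g / (\det g) ^+ e),
      (forall g, G g -> rho g \in unitmx) &
      (forall g h, G g -> G h -> rho (g *m h) = rho g *m rho h)].

(* An element T of V (x) F^k is encoded as an n x k matrix (T = sum v_i (x) w_i
   corresponds to sum v_i w_i^T); the action of (g, A) in G x SL_k is
   T |-> rho(g) T A^T. *)
Definition stab_tensor (F : numFieldType) N n k (G : set 'M[F]_N)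
    (rho : 'M[F]_N -> 'M[F]_n) (T : 'M[F]_(n, k)) : set ('M[F]_N * 'M[F]_k) :=
  [set gA | [/\ G gA.1, \det gA.2 = 1 & rho gA.1 *m T *m gA.2^T = T]].

(* An element S of V^* (x) F^m is encoded as an n x m matrix (coordinates in
   the dual basis); the dual representation is g |-> rho(g)^{-T}, so the action
   of (g, B) in G x SL_m is S |-> rho(g)^{-T} S B^T. *)
Definition stab_dual_tensor (F : numFieldType) N n m (G : set 'M[F]_N)
    (rho : 'M[F]_N -> 'M[F]_n) (S : 'M[F]_(n, m)) : set ('M[F]_N * 'M[F]_m) :=
  [set gB | [/\ G gB.1, \det gB.2 = 1 & (invmx (rho gB.1))^T *m S *m gB.2^T = S]].

Definition noncompact_locus (F : numFieldType) N n k (G : set 'M[F]_N)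
    (rho : 'M[F]_N -> 'M[F]_n) : set 'M[F]_(n, k) :=
  [set T | ~ compact (stab_tensor G rho T)].

Definition noncompact_dual_locus (F : numFieldType) N n m (G : set 'M[F]_N)
    (rho : 'M[F]_N -> 'M[F]_n) : set 'M[F]_(n, m) :=
  [set S | ~ compact (stab_dual_tensor G rho S)].

Definition contains_nonempty_open (X : Type) (isopen : set X -> Prop) (P : set X) : Prop :=
  exists U : set X, [/\ isopen U, U !=set0 & U `<=` P].

Definition corollary3p8_over (F : numFieldType) : Prop :=
  forall (N n k : nat) (G : set 'M[F]_N) (rho : 'M[F]_N -> 'M[F]_n),
    linear_algebraic_group G ->
    rational_rep G rho ->
    (forall g, G g -> \det (rho g) = 1) ->
    (0 < k < n)%N ->
    (contains_nonempty_open (@euclid_open F n k) (@noncompact_locus F N n k G rho)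
       <-> contains_nonempty_open (@euclid_open F n (n - k))
             (@noncompact_dual_locus F N n (n - k) G rho))
    /\
    (contains_nonempty_open (@zariski_open F n k) (@noncompact_locus F N n k G rho)
       <-> contains_nonempty_open (@zariski_open F n (n - k))
             (@noncompact_dual_locus F N n (n - k) G rho)).

From HB Require Import structures.
From mathcomp Require Import all_boot all_order all_algebra.
From mathcomp Require Import all_classical all_reals all_analysis.
From mathcomp Require Import complex.
From mathcomp Require mpoly.
Import (canonicals) mpoly.
Import Order.TTheory GRing.Theory Num.Theory.
Import numFieldNormedType.Exports.

Set Implicit Arguments.
Unset Strict Implicit.
Unset Printing Implicit Defensive.

Local Open Scope ring_scope.
Local Open Scope classical_set_scope.

(* Let [T] be the first [k] vectors of a basis [M] of [V] and [S] the last
   [n - k] vectors of the dual basis. Then [(g, A)] fixes [T] iff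
   [M^-1 rho(g) M] is block upper triangular with upper left block [A^-T], and
   [(g, B)] fixes [S] iff it is block upper triangular with lower right block
   [B]; since [det rho(g) = 1] either block determines the other, continuously,
   so the two stabilizers are compact together. Every nonempty open set of
   tensors contains some [T] with invertible upper block [a], and [S] ranging
   over a nonempty open set is paired in this way with the polynomial image
   [dual_partner a S] of [S]. Hence a nonempty (Euclidean or Zariski) open set of
   tensors with noncompact stabilizers yields one of dual tensors; the converse
   is the same argument for the dual representation, as [V^** = V]. *)

Lemma continuous_pair (X U V : topologicalType) (f : X -> U) (g : X -> V) x :
  {for x, continuous f} -> {for x, continuous g} ->
  {for x, continuous (fun y => (f y, g y))}.
Proof. exact: cvg_pair. Qed.

Section MatrixContinuity.
Context {F : numFieldType} {X : topologicalType}.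
Implicit Type x : X.

Lemma continuous_mxP m n (f : X -> 'M[F]_(m, n)) x :
  {for x, continuous f} <-> forall i j, {for x, continuous (fun y => f y i j)}.
Proof.
split=> [cf i j | cf A [P Pnb sPA]].
  exact: (continuous_comp cf (@coord_continuous F m n i j (f x))).
have : \forall y \near x, forall ij : 'I_m * 'I_n, P ij.1 ij.2 (f y ij.1 ij.2).
  by apply: filter_forall => -[i j]; exact: (cf i j _ (Pnb i j)).
by apply: filterS => y Py; apply: sPA => i j; exact: (Py (i, j)).
Qed.

Lemma continuous_sum (I : Type) (r : seq I) (P : pred I) (f : I -> X -> F) x :
  (forall i, {for x, continuous (f i)}) ->
  {for x, continuous (fun y => \sum_(i <- r | P i) f i y)}.
Proof. by move=> cf; apply: cvg_big => // [|i _]; [exact: add_continuous | exact: cf]. Qed.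

Lemma continuous_prod (I : Type) (r : seq I) (P : pred I) (f : I -> X -> F) x :
  (forall i, {for x, continuous (f i)}) ->
  {for x, continuous (fun y => \prod_(i <- r | P i) f i y)}.
Proof. by move=> cf; apply: cvg_big => // [|i _]; [exact: mul_continuous | exact: cf]. Qed.

Lemma continuousX (f : X -> F) x e :
  {for x, continuous f} -> {for x, continuous (fun y => f y ^+ e)}.
Proof.
move=> cf; have -> : (fun y => f y ^+ e) = (fun y => \prod_(i < e) f y).
  by apply/funext => y; rewrite prodr_const card_ord.
exact: continuous_prod.
Qed.

Lemma continuous_mulmx m n p (f : X -> 'M[F]_(m, n)) (g : X -> 'M[F]_(n, p)) x :
  {for x, continuous f} -> {for x, continuous g} ->
  {for x, continuous (fun y => f y *m g y)}.
Proof.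
move=> /continuous_mxP cf /continuous_mxP cg; apply/continuous_mxP => i j.
have -> : (fun y => (f y *m g y) i j) = (fun y => \sum_l f y i l * g y l j).
  by apply/funext => y; rewrite mxE.
by apply: continuous_sum => l; apply: continuousM.
Qed.

Lemma continuous_trmx m n (f : X -> 'M[F]_(m, n)) x :
  {for x, continuous f} -> {for x, continuous (fun y => (f y)^T)}.
Proof.
move=> /continuous_mxP cf; apply/continuous_mxP => i j.
have -> : (fun y => (f y)^T i j) = (fun y => f y j i) by apply/funext => y; rewrite mxE.
exact: cf.
Qed.

Lemma continuous_ulsubmx m1 m2 n1 n2 (f : X -> 'M[F]_(m1 + m2, n1 + n2)) x :
  {for x, continuous f} -> {for x, continuous (fun y => ulsubmx (f y))}.
Proof.
move=> /continuous_mxP cf; apply/continuous_mxP => i j.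
have -> : (fun y => ulsubmx (f y) i j) = (fun y => f y (lshift m2 i) (lshift n2 j)).
  by apply/funext => y; rewrite !mxE.
exact: cf.
Qed.

Lemma continuous_det n (f : X -> 'M[F]_n) x :
  {for x, continuous f} -> {for x, continuous (fun y => \det (f y))}.
Proof.
move=> /continuous_mxP cf; apply: continuous_sum => s.
apply: continuousM; first exact: cvg_cst.
by apply: continuous_prod => i; apply: cf.
Qed.

Lemma continuous_adj n (f : X -> 'M[F]_n) x :
  {for x, continuous f} -> {for x, continuous (fun y => \adj (f y))}.
Proof.
move=> /continuous_mxP cf; apply/continuous_mxP => i j.
have -> : (fun y => \adj (f y) i j) =
    (fun y => (-1) ^+ (j + i) * \det (row' j (col' i (f y)))).
  by apply/funext => y; rewrite mxE.
apply: continuousM; first exact: cvg_cst.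
apply/continuous_det/continuous_mxP => a b.
have -> : (fun y => row' j (col' i (f y)) a b) = (fun y => f y (lift j a) (lift i b)).
  by apply/funext => y; rewrite !mxE.
exact: cf.
Qed.

End MatrixContinuity.

Section PolynomialMaps.
Variable F : numFieldType.

Definition coordX m n : 'M[mpoly.mpoly (m * n) F]_(m, n) :=
  \matrix_(i, j) mpoly.mpolyX _ (mpoly.mnm1 (mxvec_index i j)).

Definition polymap m n p q (P : 'M[mpoly.mpoly (m * n) F]_(p, q)) (x : 'M[F]_(m, n)) :
    'M[F]_(p, q) :=
  map_mx (mpoly.meval (mxcoords x)) P.

Definition principal_preimage m n p q (d : mpoly.mpoly (m * n) F)
    (P : 'M[mpoly.mpoly (m * n) F]_(p, q)) (U : set 'M[F]_(p, q)) : set 'M[F]_(m, n) :=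
  [set x | mxeval d x != 0 /\ U (polymap P x)].

Lemma polymap_coordX m n (x : 'M[F]_(m, n)) : polymap (coordX m n) x = x.
Proof. by apply/matrixP => i j; rewrite !mxE mpoly.mevalXU /mxcoords mxvecE. Qed.

Lemma polymapC m n p q (x : 'M[F]_(m, n)) (c : 'M[F]_(p, q)) :
  polymap (map_mx (@mpoly.mpolyC (m * n) F) c) x = c.
Proof. by apply/matrixP => i j; rewrite !mxE mpoly.mevalC. Qed.

Lemma mxeval_continuous m n (d : mpoly.mpoly (m * n) F) : continuous (mxeval d).
Proof.
rewrite /mxeval /mpoly.meval /mpoly.mmap => x.
apply: continuous_sum => mu; apply: continuousM; first exact: cst_continuous.
apply: continuous_prod => i; apply: continuousX.
case/mxvec_indexP: i => i j.
have -> : (fun y : 'M[F]_(m, n) => mxcoords y (mxvec_index i j)) = (fun y => y i j).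
  by apply/funext => y; rewrite /mxcoords mxvecE.
exact: coord_continuous.
Qed.

Lemma polymap_continuous m n p q (P : 'M[mpoly.mpoly (m * n) F]_(p, q)) :
  continuous (polymap P).
Proof.
move=> x; apply/continuous_mxP => i j.
have -> : (fun y => polymap P y i j) = mxeval (P i j) by apply/funext => y; rewrite mxE.
exact: mxeval_continuous.
Qed.

Lemma open_nonzero_locus m n (d : mpoly.mpoly (m * n) F) :
  open [set x | mxeval d x != 0].
Proof.
have -> : [set x | mxeval d x != 0] = mxeval d @^-1` ~` [set 0].
  by apply/seteqP; split=> x /= /eqP.
apply: open_comp => [x _|]; first exact: mxeval_continuous.
by rewrite openC; apply/accessible_closed_set1/hausdorff_accessible/norm_hausdorff.
Qed.

Lemma zariski_open_open m n (U : set 'M[F]_(m, n)) : zariski_open U -> open U.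
Proof.
case=> S ->; have -> : ~` [set x | forall p, S p -> mxeval p x = 0] =
    \bigcup_(p in S) [set x | mxeval p x != 0].
  apply/seteqP; split=> x /=; last by case=> p Sp /eqP px /(_ p Sp).
  by move=> /existsNP [p /not_implyP [Sp /eqP px]]; exists p.
by apply: bigcup_open => p _; exact: open_nonzero_locus.
Qed.

Lemma open_principal_preimage m n p q d (P : 'M[mpoly.mpoly (m * n) F]_(p, q)) U :
  open U -> open (principal_preimage d P U).
Proof.
move=> oU; apply: openI; first exact: open_nonzero_locus.
by apply: open_comp => // x _; exact: polymap_continuous.
Qed.

Lemma zariski_open_principal_preimage m n p q d (P : 'M[mpoly.mpoly (m * n) F]_(p, q)) U :
  zariski_open U -> zariski_open (principal_preimage d P U).
Proof.
move=> [S ->].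
pose P_seq := [tuple mxvec P 0 i | i < p * q].
exists [set r | exists2 s, S s & r = mpoly.comp_mpoly P_seq s * d].
have evalE s x : mxeval (mpoly.comp_mpoly P_seq s * d) x =
    mxeval s (polymap P x) * mxeval d x.
  rewrite /mxeval mpoly.mevalM mpoly.comp_mpoly_meval; congr (_ * _).
  apply: mpoly.meval_eq => i; rewrite tnth_mktuple /mxcoords /polymap.
  by rewrite -map_mxvec mxE.
apply/seteqP; split=> x /=.
  case=> dx nU H; apply: nU => s Ss; apply/eqP.
  have /eqP := H _ (ex_intro2 _ _ s Ss erefl).
  by rewrite evalE mulf_eq0 (negbTE dx) orbF.
move=> nH; have dx : mxeval d x != 0.
  by apply/eqP => d0; apply: nH => r [s Ss ->]; rewrite evalE d0 mulr0.
by split=> // H; apply: nH => r [s Ss ->]; rewrite evalE H // mul0r.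
Qed.

End PolynomialMaps.

Lemma adj_det1 (R : comUnitRingType) n (A : 'M[R]_n) : \det A = 1 -> \adj A = invmx A.
Proof. by move=> dA; rewrite /invmx unitmxE dA unitr1 invr1 scale1r. Qed.

Lemma det_ublock_submx (R : comNzRingType) m n (A : 'M[R]_(m + n)) :
  dlsubmx A = 0 -> \det A = \det (ulsubmx A) * \det (drsubmx A).
Proof. by move=> A0; rewrite -{1}(submxK A) A0 det_ublock. Qed.

Section FrameStabilizers.
Variables (F : numFieldType) (N k m : nat) (G : set 'M[F]_N).
Variable sig : 'M[F]_N -> 'M[F]_(k + m).
Hypothesis sig_det1 : forall g, G g -> \det (sig g) = 1.
Hypothesis sig_cont : forall g, G g -> {for g, continuous sig}.
Variable M : 'M[F]_(k + m).
Hypothesis M_unit : M \in unitmx.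

Let Q g := invmx M *m sig g *m M.
Let T := M *m col_mx 1%:M 0.
Let S := (invmx M)^T *m col_mx 0 1%:M.

Let MQ g : M *m Q g = sig g *m M.
Proof. by rewrite /Q !mulmxA mulmxV // mul1mx. Qed.

Lemma det_Q g : G g -> \det (Q g) = 1.
Proof.
by move=> Gg; rewrite /Q !det_mulmx det_inv sig_det1 // mulr1 mulVr // -unitmxE.
Qed.

Lemma stab_tensor_frameP g A : G g ->
  stab_tensor G sig T (g, A) <->
  [/\ \det A = 1, dlsubmx (Q g) = 0 & ulsubmx (Q g) *m A^T = 1%:M].
Proof.
move=> Gg; rewrite /stab_tensor /=.
have frameE : sig g *m T *m A^T = T <->
    col_mx (ulsubmx (Q g) *m A^T) (dlsubmx (Q g) *m A^T) = col_mx 1%:M 0.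
  have -> : col_mx (ulsubmx (Q g) *m A^T) (dlsubmx (Q g) *m A^T) =
      Q g *m col_mx 1%:M 0 *m A^T.
    by rewrite -{3}[Q g]submxK mul_block_col !mulmx1 !mulmx0 !addr0 mul_col_mx.
  rewrite /T !mulmxA -MQ -!mulmxA.
  by split=> [/(can_inj (mulKmx M_unit))|->].
split=> [[_ dA /frameE/eq_col_mx [ulA dlA]] | [dA dl0 ulA]]; last first.
  by split=> //; apply/frameE; rewrite dl0 mul0mx ulA.
split=> //; have A_unit : A^T \in unitmx by rewrite unitmx_tr unitmxE dA unitr1.
by rewrite -(mulmxK A_unit (dlsubmx (Q g))) dlA mul0mx.
Qed.

Lemma stab_dual_tensor_frameP g B : G g ->
  stab_dual_tensor G sig S (g, B) <->
  [/\ \det B = 1, dlsubmx (Q g) = 0 & B = drsubmx (Q g)].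
Proof.
move=> Gg; rewrite /stab_dual_tensor /=.
have sig_unit : sig g \in unitmx by rewrite unitmxE sig_det1 // unitr1.
have sigM_unit : sig g *m M \in unitmx by rewrite unitmx_mul sig_unit.
have frameE : (invmx (sig g))^T *m S *m B^T = S <->
    row_mx 0 B = row_mx (dlsubmx (Q g)) (drsubmx (Q g)).
  have -> : row_mx 0 B = ((invmx (sig g))^T *m S *m B^T)^T *m (sig g *m M).
    rewrite /S !trmx_mul !trmxK !mulmxA mulmxKV // mulmxKV //.
    by rewrite tr_col_mx trmx0 trmx1 mul_mx_row mulmx0 mulmx1.
  have -> : row_mx (dlsubmx (Q g)) (drsubmx (Q g)) = S^T *m (sig g *m M).
    rewrite /S trmx_mul trmxK tr_col_mx trmx0 trmx1 -!mulmxA [invmx M *m _]mulmxA.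
    by rewrite -[X in _ = _ *m X]submxK mul_row_block !mul0mx !mul1mx !add0r.
  by split=> [->|/(can_inj (mulmxK sigM_unit))/trmx_inj].
split=> [[_ dB /frameE/eq_row_mx [dl0 eB]] | [dB dl0 eB]] //.
by split=> //; apply/frameE; rewrite dl0 eB.
Qed.

Let dual_to_tensor (gB : 'M[F]_N * 'M[F]_m) : 'M[F]_N * 'M[F]_k :=
  (gB.1, (\adj (ulsubmx (Q gB.1)))^T).

Lemma stab_tensor_frame_image :
  dual_to_tensor @` stab_dual_tensor G sig S = stab_tensor G sig T.
Proof.
have ul_det1 g : G g -> dlsubmx (Q g) = 0 -> \det (drsubmx (Q g)) = 1 ->
    \det (ulsubmx (Q g)) = 1.
  by move=> Gg dl0 dr1; rewrite -[LHS]mulr1 -dr1 -det_ublock_submx // det_Q.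
apply/seteqP; split=> [_ [[g B] SgB <-] | [g A] TgA].
  have Gg : G g by case: SgB.
  have /(stab_dual_tensor_frameP _ Gg) [dB dl0 eB] := SgB.
  have ul1 : \det (ulsubmx (Q g)) = 1 by apply: ul_det1 => //; rewrite -eB.
  apply/(stab_tensor_frameP _ Gg); split=> //=.
    by rewrite det_tr adj_det1 // det_inv ul1 invr1.
  by rewrite trmxK adj_det1 // mulmxV // unitmxE ul1 unitr1.
have Gg : G g by case: TgA.
have /(stab_tensor_frameP _ Gg) [dA dl0 ulA] := TgA.
have ul1 : \det (ulsubmx (Q g)) = 1.
  by move/(congr1 determinant): ulA; rewrite det_mulmx det_tr dA mulr1 det1.
have dr1 : \det (drsubmx (Q g)) = 1.
  by move: (det_Q Gg); rewrite det_ublock_submx // ul1 mul1r.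
exists (g, drsubmx (Q g)); first exact/(stab_dual_tensor_frameP _ Gg).
rewrite /dual_to_tensor /= adj_det1 //; congr pair; apply: trmx_inj.
have [ul_unit _] := mulmx1_unit ulA.
by rewrite trmxK -[A^T](mulKmx ul_unit) ulA mulmx1.
Qed.

Lemma compact_stab_tensor_frame :
  compact (stab_dual_tensor G sig S) -> compact (stab_tensor G sig T).
Proof.
move=> cS; rewrite -stab_tensor_frame_image; apply: continuous_compact cS.
apply: continuous_in_subspaceT => -[g B] /set_mem [Gg _ _].
apply: continuous_pair; first exact: cvg_fst.
apply/continuous_trmx/continuous_adj/continuous_ulsubmx.
apply: continuous_mulmx; last exact: cst_continuous.
apply: continuous_mulmx; first exact: cst_continuous.
exact: continuous_comp cvg_fst (sig_cont Gg).
Qed.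

End FrameStabilizers.

(* [T] consists of the first [k] vectors of the basis [M], [S] of the last [m]
   vectors of its dual basis. *)
Definition dual_frames (F : numFieldType) k m
    (T : 'M[F]_(k + m, k)) (S : 'M[F]_(k + m, m)) : Prop :=
  exists2 M : 'M[F]_(k + m), M \in unitmx &
    T = M *m col_mx 1%:M 0 /\ S = (invmx M)^T *m col_mx 0 1%:M.

Lemma dual_frames_col_mx (F : numFieldType) k m (a : 'M[F]_k) (c : 'M[F]_(m, k))
    (b : 'M[F]_(k, m)) (d : 'M[F]_m) :
  a \in unitmx -> d \in unitmx -> (col_mx a c)^T *m col_mx b d = 0 ->
  dual_frames (col_mx a c) (col_mx b d).
Proof.
move=> a_unit d_unit orth.
pose M := row_mx (col_mx a c) (col_mx 0 (invmx d)^T).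
have M_unit : M \in unitmx.
  rewrite /M -block_mxEh unitmxE det_lblock unitrM -!unitmxE a_unit /=.
  by rewrite unitmx_tr unitmx_inv.
exists M => //; split; first by rewrite /M mul_row_col mulmx1 mulmx0 addr0.
have MS : M^T *m col_mx b d = col_mx 0 1%:M.
  rewrite /M tr_row_mx mul_col_mx orth tr_col_mx trmx0 trmxK mul_row_col.
  by rewrite mul0mx add0r mulVmx.
by rewrite trmx_inv -MS mulKmx // unitmx_tr.
Qed.

Lemma horner_char_poly (R : comNzRingType) n (A : 'M[R]_n) t :
  (char_poly A).[t] = \det (t%:M - A).
Proof.
rewrite /char_poly -horner_evalE -det_map_mx; congr (\det _).
apply/matrixP => i j; rewrite !mxE /= horner_evalE.
by case: (i == j); rewrite /= ?mulr1n ?mulr0n !hornerE.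
Qed.

(* Among the [e / (j + 2)] there are more candidates than eigenvalues of [- A]. *)
Lemma exists_unitmx_shift (F : numFieldType) n (A : 'M[F]_n) (e : F) :
  0 < e -> exists2 t, 0 < t < e & A + t%:M \in unitmx.
Proof.
move=> e0; pose p := char_poly (- A).
pose ts := [seq e / j.+2%:R | j <- iota 0 (size p)].
have ts_uniq : uniq ts.
  rewrite map_inj_uniq ?iota_uniq // => i j /(mulfI (lt0r_neq0 e0)) /invr_inj /eqP.
  by rewrite eqr_nat => /eqP [].
have : ~~ all (root p) ts.
  apply/negP => /(max_poly_roots (monic_neq0 (char_poly_monic _))) /(_ ts_uniq).
  by rewrite size_map size_iota ltnn.
case/allPn => _ /mapP [j _ ->]; rewrite /root horner_char_poly opprK addrC => pt.
exists (e / j.+2%:R); last by rewrite unitmxE unitfE.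
rewrite divr_gt0 ?ltr0n //= ltr_pdivrMr ?ltr0n //.
by rewrite -{1}(mulr1 e) ltr_pM2l // ltr1n.
Qed.

Lemma open_usubmx_unit (F : numFieldType) k m (U : set 'M[F]_(k + m, k)) T1 :
  open U -> U T1 -> exists2 T0, U T0 & usubmx T0 \in unitmx.
Proof.
move=> oU UT1; pose E : 'M[F]_(k + m, k) := col_mx 1%:M 0.
have : \forall t \near 0, U (T1 + t *: E).
  have line_cont : {for 0, continuous (fun t : F => T1 + t *: E)}.
    by apply: continuousD; [exact: cst_continuous | exact: continuousZr_tmp].
  by apply: line_cont; rewrite scale0r addr0; exact: open_nbhs_nbhs.
case/nbhs_ballP => e /= e0 Ue.
have [t /andP [t0 te] t_unit] := exists_unitmx_shift (usubmx T1) e0.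
exists (T1 + t *: E).
  by apply: Ue; rewrite -ball_normE /= sub0r normrN gtr0_norm.
by rewrite -{1}(vsubmxK T1) scale_col_mx add_col_mx col_mxKu scalemx1.
Qed.

(* For [S = col_mx b d] with [d] invertible, this is [det d] times
   [col_mx a (- (b *m invmx d)^T *m a)], the adjugate keeping it polynomial in [S]. *)
Definition dual_partner (R : comNzRingType) k m (a : 'M[R]_k) (S : 'M[R]_(k + m, m)) :
    'M[R]_(k + m, k) :=
  col_mx (\det (dsubmx S) *: a) (- (usubmx S *m \adj (dsubmx S))^T *m a).

Lemma map_dual_partner (R R' : comNzRingType) (f : {rmorphism R -> R'}) k m
    (a : 'M[R]_k) (S : 'M[R]_(k + m, m)) :
  map_mx f (dual_partner a S) = dual_partner (map_mx f a) (map_mx f S).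
Proof.
rewrite /dual_partner map_col_mx map_mxZ -(det_map_mx f) map_dsubmx map_mxM map_mxN.
by rewrite -map_trmx map_mxM map_mx_adj map_usubmx map_dsubmx.
Qed.

Lemma dual_frames_dual_partner (F : numFieldType) k m (a : 'M[F]_k) (S : 'M[F]_(k + m, m)) :
  a \in unitmx -> dsubmx S \in unitmx -> dual_frames (dual_partner a S) S.
Proof.
move=> a_unit d_unit; rewrite -[S in dual_frames _ S]vsubmxK.
apply: dual_frames_col_mx => //.
  by rewrite unitmxE detZ unitrM -unitmxE a_unit andbT unitrX // -unitmxE.
rewrite tr_col_mx mul_row_col linearZ /= -scalemxAl trmx_mul linearN /= trmxK.
rewrite mulmxN mulNmx -!mulmxA mul_adj_mx mul_mx_scalar -scalemxAr.
by rewrite addrN.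
Qed.

Lemma dual_partner_col_mx (F : numFieldType) k m (a : 'M[F]_k) (c : 'M[F]_(m, k)) :
  a \in unitmx -> dual_partner a (col_mx (- (c *m invmx a)^T) 1%:M) = col_mx a c.
Proof.
move=> a_unit; rewrite /dual_partner col_mxKd col_mxKu det1 scale1r adj1 mulmx1.
by rewrite linearN /= trmxK opprK mulmxKV.
Qed.

Lemma noncompact_locus_eq (F : numFieldType) N n k (G : set 'M[F]_N)
    (s1 s2 : 'M[F]_N -> 'M[F]_n) :
  (forall g, G g -> s1 g = s2 g) ->
  noncompact_locus (k := k) G s1 = noncompact_locus G s2.
Proof.
move=> s12; apply/funext => T; congr (~ compact _).
by rewrite /stab_tensor; apply/seteqP; split=> -[g A] [Gg dA]; rewrite /= (s12 g Gg).
Qed.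

Lemma noncompact_dual_locusE (F : numFieldType) N n m (G : set 'M[F]_N)
    (s : 'M[F]_N -> 'M[F]_n) :
  noncompact_dual_locus (m := m) G s = noncompact_locus G (fun g => (invmx (s g))^T).
Proof. by []. Qed.

Section OpenTransfer.
Variable F : numFieldType.
Variable isopen : forall m n, set 'M[F]_(m, n) -> Prop.
Hypothesis isopen_open : forall m n (U : set 'M[F]_(m, n)), isopen U -> open U.
Hypothesis isopen_principal_preimage :
  forall m n p q d (P : 'M[mpoly.mpoly (m * n) F]_(p, q)) U,
  isopen U -> isopen (principal_preimage d P U).

Lemma isopen_dual_frames k m (U : set 'M[F]_(k + m, k)) :
  isopen U -> U !=set0 ->
  exists U' : set 'M[F]_(k + m, m),
    [/\ isopen U', U' !=set0 & forall S, U' S -> exists2 T, U T & dual_frames T S].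
Proof.
move=> oU [T1 UT1]; have [T0 UT0 a0_unit] := open_usubmx_unit (isopen_open oU) UT1.
pose X := coordX F (k + m) m.
pose P := dual_partner (map_mx (@mpoly.mpolyC _ F) (usubmx T0)) X.
have PE S : polymap P S = dual_partner (usubmx T0) S.
  rewrite /polymap map_dual_partner.
  by congr dual_partner; [exact: polymapC | exact: polymap_coordX].
have detE S : mxeval (\det (dsubmx X)) S = \det (dsubmx S).
  rewrite /mxeval -det_map_mx map_dsubmx.
  by congr (\det (dsubmx _)); exact: polymap_coordX.
exists (principal_preimage (\det (dsubmx X)) P U); split.
- exact: isopen_principal_preimage.
- exists (col_mx (- (dsubmx T0 *m invmx (usubmx T0))^T) 1%:M).
  rewrite /principal_preimage /= PE detE col_mxKd det1 oner_neq0.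
  by rewrite dual_partner_col_mx // vsubmxK.
move=> S [dS US]; rewrite PE in US; rewrite detE in dS.
exists (dual_partner (usubmx T0) S) => //.
by apply: dual_frames_dual_partner; rewrite // unitmxE unitfE.
Qed.

Lemma noncompact_locus_dual_open N n k m (G : set 'M[F]_N) (sig : 'M[F]_N -> 'M[F]_n) :
  (k + m)%N = n -> (forall g, G g -> \det (sig g) = 1) ->
  (forall g, G g -> {for g, continuous sig}) ->
  contains_nonempty_open (@isopen n k) (noncompact_locus G sig) ->
  contains_nonempty_open (@isopen n m) (noncompact_dual_locus G sig).
Proof.
move=> kmn; subst n => sig_det1 sig_cont [U [oU U0 UP]].
have [U' [oU' U'0 U'dual]] := isopen_dual_frames oU U0.
exists U'; split=> // S /U'dual [T /UP T_nc [M M_unit [eT ->]]].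
by rewrite eT in T_nc => /(compact_stab_tensor_frame sig_det1 sig_cont M_unit).
Qed.

Lemma noncompact_locus_duality N n k m (G : set 'M[F]_N) (sig : 'M[F]_N -> 'M[F]_n) :
  (k + m)%N = n -> (forall g, G g -> \det (sig g) = 1) ->
  (forall g, G g -> {for g, continuous sig}) ->
  contains_nonempty_open (@isopen n k) (noncompact_locus G sig) <->
  contains_nonempty_open (@isopen n m) (noncompact_dual_locus G sig).
Proof.
move=> kmn sig_det1 sig_cont; split; first exact: noncompact_locus_dual_open.
pose sig' g := (\adj (sig g))^T.
have sig'E g : G g -> sig' g = (invmx (sig g))^T.
  by move=> Gg; rewrite /sig' adj_det1 ?sig_det1.
have -> : noncompact_dual_locus (m := m) G sig = noncompact_locus G sig'.
  by rewrite noncompact_dual_locusE; apply: noncompact_locus_eq => g Gg; rewrite sig'E.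
have -> : noncompact_locus (k := k) G sig = noncompact_dual_locus G sig'.
  rewrite noncompact_dual_locusE; apply: noncompact_locus_eq => g Gg.
  by rewrite sig'E // -trmx_inv invmxK trmxK.
apply: noncompact_locus_dual_open; first by rewrite addnC.
  by move=> g Gg; rewrite sig'E // det_tr det_inv sig_det1 // invr1.
by move=> g Gg; apply/continuous_trmx/continuous_adj/sig_cont.
Qed.

End OpenTransfer.

Lemma rational_rep_continuous (F : numFieldType) N n (G : set 'M[F]_N)
    (rho : 'M[F]_N -> 'M[F]_n) :
  linear_algebraic_group G -> rational_rep G rho ->
  exists2 r : 'M[F]_N -> 'M[F]_n,
    (forall g, G g -> rho g = r g) & (forall g, G g -> {for g, continuous r}).
Proof.
case=> -[S GE] _ _ _ [[P [e rhoE]] _ _].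
exists (fun g => \matrix_(i, j) (mxeval (P i j) g / \det g ^+ e)) => // g.
rewrite GE => -[g_unit _]; apply/continuous_mxP => i j.
have -> : (fun y => (\matrix_(i, j) (mxeval (P i j) y / \det y ^+ e)) i j) =
    (fun y => mxeval (P i j) y * (\det y ^+ e)^-1) by apply/funext => y; rewrite mxE.
apply: continuousM; first exact: mxeval_continuous.
apply: continuousV; first by rewrite expf_neq0 // -unitfE -unitmxE.
exact/continuousX/continuous_det/cvg_id.
Qed.

Lemma corollary3p8_numField (F : numFieldType) : corollary3p8_over F.
Proof.
move=> N n k G rho G_alg rho_rat rho_det1 /andP [_ /ltnW kn].
have [r rho_r r_cont] := rational_rep_continuous G_alg rho_rat.
have r_det1 g : G g -> \det (r g) = 1 by move=> Gg; rewrite -rho_r ?rho_det1.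
have rho_r_dual g : G g -> (invmx (rho g))^T = (invmx (r g))^T by move=> Gg; rewrite rho_r.
rewrite !(noncompact_locus_eq _ rho_r) !noncompact_dual_locusE.
rewrite !(noncompact_locus_eq _ rho_r_dual) -!noncompact_dual_locusE.
have kmn : (k + (n - k))%N = n by rewrite subnKC.
split; apply: noncompact_locus_duality kmn r_det1 r_cont.
- by [].
- exact: open_principal_preimage.
- exact: zariski_open_open.
- exact: zariski_open_principal_preimage.
Qed.

Theorem corollary3p8 (R : realType) :
  corollary3p8_over R /\ corollary3p8_over R[i].
Proof. by split; apply: corollary3p8_numField. Qed.
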